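(* Suppose $\mu(f)<0$ and for some $\delta\in(0,1]$ and every $x\in E$ \[\bar{\gamma}(x)=\sup_{\tau} \liminf_{T \to \infty} \mathbb{E}^x \Big\{(1-\delta)\mu(f)(\tau \wedge T)-q(X_{\tau \wedge T}) \Big\} < \infty,\] where the supremum is over stopping times $\tau$. Then for every $x\in E$, with $d(x)=\delta\mu(f)<0$, \[ \gamma (x) = \sup_{\tau} \liminf_{T \to \infty} \mathbb{E}^x \Big\{ \int_0^{\tau \wedge T} \big(f(X_s) - d(x)\big) ds \Big\} < \infty. \]
   Context: Let $(X_t)$ be a Feller–Markov process on $(\Omega,F,(F_t))$ with values in a locally compact metric space $E$ with Borel $\sigma$-field, with laws $\mathbb{P}^x$ and expectations $\mathbb{E}^x$ when started at $x$, and transition semigroup $P_t$. Assume (A1) weak Feller property: $P_t\,\mathcal{C}_0\subseteq\mathcal{C}_0$, where $\mathcal{C}_0$ is the space of continuous bounded functions on $E$ vanishing at infinity; and (A2): there is a unique probability measure $\mu$ on $E$, a function $K:E\to(0,\infty)$ bounded on compacts and $h:[0,\infty)\to\mathbb{R}_+$ with $\int_0^\infty h(t)dt<\infty$ such that $\|P_t(x,\cdot)-\mu(\cdot)\|_{TV}\le K(x)h(t)$ for all $x$, and $\mathbb{E}^x\{K(X_T)\}<\infty$ for each $T\ge0$. Let $f$ be a continuous bounded function, $\mu(f)=\int_E f\,d\mu$, and let $q(x)=\mathbb{E}^x\{\int_0^\infty (f(X_t)-\mu(f))dt\}$ be the centred zero-potential of $f$; under (A1)–(A2), $q$ is continuous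 and for any bounded stopping time $\tau$, $q(x)=\mathbb{E}^x\{\int_0^\tau(f(X_t)-\mu(f))dt+q(X_\tau)\}$. *)

From HB Require Import structures.
From mathcomp Require Import all_boot all_order all_algebra.
From mathcomp Require Import all_classical all_reals all_analysis measurable_realfun.

Set Implicit Arguments.
Unset Strict Implicit.
Unset Printing Implicit Defensive.

Import Order.TTheory GRing.Theory Num.Theory.
Import numFieldNormedType.Exports.

Local Open Scope classical_set_scope.
Local Open Scope ring_scope.

(* Metric spaces with a distinguished point (needed by MathComp-Analysis to
   build a measurable type on E; E is nonempty anyway since it carries the
   probability measure mu). *)
#[short(type="pmetricType")]
HB.structure Definition PointedMetric (K : numDomainType) :=
  { M of Pointed M & Metric K M }.

Definition borelE {R : realType} (E : pmetricType R)
  : measurableType (sigma_display (@open E)) :=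
  [the measurableType _ of g_sigma_algebraType (@open E)].

Section FellerMarkov.
Context {R : realType} {E : pmetricType R}.
Context {dO : measure_display} {Omega : measurableType dO}.

Definition C0 (g : E -> R) : Prop :=
  [/\ continuous g,
      exists M : R, forall x, `|g x| <= M &
      forall eps : R, 0 < eps ->
        exists C : set E, compact C /\ forall x, ~ C x -> `|g x| < eps].

Definition Cb (g : E -> R) : Prop :=
  continuous g /\ exists M : R, forall x, `|g x| <= M.

Definition filtration (F : R -> set (set Omega)) : Prop :=
  [/\ forall t, 0 <= t -> sigma_algebra setT (F t),
      forall t, 0 <= t -> F t `<=` measurable &
      forall s t, 0 <= s -> s <= t -> F s `<=` F t].

Definition stopping_time (F : R -> set (set Omega)) (tau : Omega -> \bar R) : Prop :=
  (forall w, 0 <= tau w)%E /\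
  forall t, 0 <= t -> F t [set w | (tau w <= t%:E)%E].

Definition stopT (tau : Omega -> \bar R) (T : R) (w : Omega) : R :=
  fine (Order.min (tau w) T%:E).

Definition markov_process (F : R -> set (set Omega))
    (P : E -> probability Omega R) (X : R -> Omega -> E)
    (Pt : R -> E -> probability (borelE E) R) : Prop :=
  filtration F /\
      (forall t (A : set (borelE E)), 0 <= t -> measurable A -> F t (X t @^-1` A)) /\
      measurable_fun [set p : R * Omega | 0 <= p.1]
        (fun p : R * Omega => (X p.1 p.2 : borelE E)) /\
      (forall w t, 0 <= t -> (fun s => X s w) @ t^'+ --> X t w) /\
      (forall x, P x [set w | X 0 w = x] = 1%E) /\
      (forall t x (A : set (borelE E)), 0 <= t -> measurable A ->
        Pt t x A = P x (X t @^-1` A)) /\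
      (forall t (A : set (borelE E)), 0 <= t -> measurable A ->
        measurable_fun setT (fun x : borelE E => (Pt t x A : \bar R))) /\
      forall x s t (A : set (borelE E)) (G : set Omega),
        0 <= s -> 0 <= t -> measurable A -> F s G ->
        P x (G `&` X (s + t) @^-1` A) = (\int[P x]_(w in G) Pt t (X s w) A)%E.

Definition semigroup (Pt : R -> E -> probability (borelE E) R)
    (t : R) (g : E -> R) (x : E) : R :=
  fine (\int[Pt t x]_y (g y)%:E).

Definition weak_feller (Pt : R -> E -> probability (borelE E) R) : Prop :=
  forall t (g : E -> R), 0 <= t -> C0 g -> C0 (semigroup Pt t g).

Definition TVdist (m1 m2 : probability (borelE E) R) : \bar R :=
  ereal_sup [set `|(m1 A - m2 A)%E|%E | A in @measurable _ (borelE E)].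

Definition A2 (P : E -> probability Omega R) (X : R -> Omega -> E)
    (Pt : R -> E -> probability (borelE E) R)
    (mu : probability (borelE E) R) (K : E -> R) (h : R -> R) : Prop :=
  (forall x, 0 < K x) /\
  (forall C : set E, compact C -> exists M : R, forall x, C x -> K x <= M) /\
  (forall t, 0 <= t -> 0 <= h t) /\
  (lebesgue_measure : measure _ R).-integrable `[0%R, +oo[ (fun t => (h t)%:E) /\
  (forall x t, 0 <= t -> (TVdist (Pt t x) mu <= (K x * h t)%:E)%E) /\
  (forall nu : probability (borelE E) R,
     (forall x t, 0 <= t -> (TVdist (Pt t x) nu <= (K x * h t)%:E)%E) -> nu = mu) /\
  (forall x T, 0 <= T -> (\int[P x]_w (K (X T w))%:E < +oo)%E).

Definition mean (mu : probability (borelE E) R) (f : E -> R) : R :=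
  fine (\int[mu]_y (f y)%:E).

(* centred zero-potential q(x) = int_0^oo (P_t f(x) - mu(f)) dt
   (= E^x int_0^oo (f(X_t) - mu(f)) dt, by Fubini) *)
Definition zero_potential (Pt : R -> E -> probability (borelE E) R)
    (mu : probability (borelE E) R) (f : E -> R) (x : E) : R :=
  fine (\int[lebesgue_measure]_(t in `[0%R, +oo[)
          (semigroup Pt t f x - mean mu f)%:E).

(* the facts on q recalled in the context (consequences of (A1)-(A2)):
   q is continuous and, for every bounded stopping time tau,
   q(x) = E^x { int_0^tau (f(X_t) - mu(f)) dt + q(X_tau) }. *)
Definition zero_potential_facts (F : R -> set (set Omega))
    (P : E -> probability Omega R) (X : R -> Omega -> E)
    (Pt : R -> E -> probability (borelE E) R)
    (mu : probability (borelE E) R) (f : E -> R) : Prop :=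
  let q := zero_potential Pt mu f in
  continuous q /\
  forall x (tau : Omega -> \bar R), stopping_time F tau ->
    (exists T : R, forall w, (tau w <= T%:E)%E) ->
    (q x)%:E = (\int[P x]_w
       ((\int[lebesgue_measure]_(s in `[0%R, fine (tau w)])
            (f (X s w) - mean mu f)%:E)
        + (q (X (fine (tau w)) w))%:E))%E.

Definition gamma_bar (F : R -> set (set Omega))
    (P : E -> probability Omega R) (X : R -> Omega -> E)
    (Pt : R -> E -> probability (borelE E) R)
    (mu : probability (borelE E) R) (f : E -> R) (delta : R) (x : E) : \bar R :=
  ereal_sup [set limf_einf
      (fun T : R => (\int[P x]_w
          ((1 - delta) * mean mu f * stopT tau T w
             - zero_potential Pt mu f (X (stopT tau T w) w))%:E)%E)
      (pinfty_nbhs R)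
    | tau in stopping_time F].

Definition gamma (F : R -> set (set Omega))
    (P : E -> probability Omega R) (X : R -> Omega -> E)
    (f : E -> R) (d : R) (x : E) : \bar R :=
  ereal_sup [set limf_einf
      (fun T : R => (\int[P x]_w
          (\int[lebesgue_measure]_(s in `[0%R, stopT tau T w])
             (f (X s w) - d)%:E))%E)
      (pinfty_nbhs R)
    | tau in stopping_time F].

End FellerMarkov.

(* For T >= 0 and any stopping time tau, the optional-stopping identity for
   the zero-potential q at the bounded time s = tau /\ T gives
     E^x int_0^s (f(X_u) - d) du
       = q(x) + E^x { (mu(f) - d) s - q(X_s) },
   and mu(f) - d = (1 - delta) mu(f) for d = delta mu(f).  Taking liminf in T
   and sup over tau yields gamma(x) <= q(x) + bar-gamma(x) < +oo. *)

From HB Require Import structures.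
From mathcomp Require Import all_boot all_order all_algebra.
From mathcomp Require Import all_classical all_reals all_analysis measurable_realfun.

Import Order.TTheory GRing.Theory Num.Theory.
Import numFieldNormedType.Exports.

Local Open Scope classical_set_scope.
Local Open Scope ring_scope.

Section liminf_shift.
Context {R : realType} {T : choiceType} {X : filteredType T}.
Local Open Scope ereal_scope.

Lemma ereal_inf_addl (A : set X) (J : X -> \bar R) (a : R) :
  ereal_inf ((fun t => a%:E + J t) @` A) = a%:E + ereal_inf (J @` A).
Proof.
apply/eqP; rewrite eq_le; apply/andP; split.
  rewrite -leeBlDl //; apply: le_ereal_inf_tmp => _ [t At <-].
  by rewrite leeBlDl //; apply: ereal_inf_lbound; exists t.
apply: le_ereal_inf_tmp => _ [t At <-].
by rewrite leeD2l //; apply: ereal_inf_lbound; exists t.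
Qed.

Lemma limf_einf_le_addl (F : set_system X) {FF : Filter F}
    (I J : X -> \bar R) (a : R) :
  (\forall t \near F, I t = a%:E + J t) ->
  limf_einf I F <= a%:E + limf_einf J F.
Proof.
move=> IJ; rewrite [leLHS]limf_einfE; apply: ge_ereal_sup => _ [V FV <-].
pose W := V `&` [set t | I t = a%:E + J t].
have FW : F W by apply: filterI.
apply: (@le_trans _ _ (ereal_inf (I @` W))).
  by apply: ereal_inf_le_tmp => _ [t [Vt _] <-]; exists t.
have -> : I @` W = (fun t => a%:E + J t) @` W.
  by apply: eq_imagel => t [_].
rewrite ereal_inf_addl leeD2l // limf_einfE.
by apply: ereal_sup_ubound; exists W.
Qed.

End liminf_shift.

Section integrability.
Context {d} {T : measurableType d} {R : realType}.
Variable mu : {measure set T -> \bar R}.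
Local Open Scope ereal_scope.

Lemma integrable_normr_le (A : set T) (g : T -> R) (C : R) :
  measurable A -> mu A < +oo -> measurable_fun A g ->
  (forall x, A x -> (`|g x| <= C)%R) -> mu.-integrable A (EFin \o g).
Proof.
move=> mA muA mg gC; apply: measurable_bounded_integrable => //.
exists C; split; first exact: num_real.
by move=> M CM x Ax; apply: le_trans (gC x Ax) (ltW CM).
Qed.

Lemma integrable_fin_integral (D : set T) (g : T -> \bar R) : measurable D ->
  measurable_fun D g -> \int[mu]_(x in D) g x \is a fin_num ->
  mu.-integrable D g.
Proof.
move=> mD mg; rewrite integralE fin_numB => /andP[gpos gneg].
apply/integrableP; split => //.
rewrite -[fun x => _]/(abse \o g) fune_abse ge0_integralD //; last 2 first.
- exact: measurable_funepos.
- exact: measurable_funeneg.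
by apply: lte_add_pinfty; rewrite -ge0_fin_numE // integral_ge0.
Qed.

End integrability.

Section lebesgue_itv0.
Context {R : realType}.
Local Open Scope ereal_scope.
Implicit Types (r C k : R) (g : R -> R).

Lemma lebesgue_measure_itv0 r : (0 <= r)%R ->
  lebesgue_measure `[0%R, r]%classic = r%:E.
Proof.
move=> r0; rewrite lebesgue_measure_itv /= lte_fin; case: ifPn => [_|].
  by rewrite -EFinD subr0.
by rewrite -leNgt => r_le0; have -> : r = 0%R by apply/le_anti/andP.
Qed.

Lemma integrable_itv0_normr_le r g C : (0 <= r)%R ->
  measurable_fun `[0%R, r] g -> (forall t, `|g t| <= C)%R ->
  lebesgue_measure.-integrable `[0%R, r] (EFin \o g).
Proof.
move=> r0 mg gC; apply: (integrable_normr_le _ _ _ C) => //.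
by rewrite /= lebesgue_measure_itv0 // ltry.
Qed.

Lemma abse_integral_itv0_le r g C : (0 <= r)%R ->
  measurable_fun `[0%R, r] g -> (forall t, `|g t| <= C)%R ->
  `|\int[lebesgue_measure]_(t in `[0%R, r]) (g t)%:E| <= (C * r)%:E.
Proof.
move=> r0 mg gC.
have mEg : measurable_fun `[0%R, r] (EFin \o g) by exact/measurable_EFinP.
apply: (le_trans (le_abse_integral lebesgue_measure (measurable_itv _) mEg)).
apply: (@le_trans _ _ (\int[lebesgue_measure]_(t in `[0%R, r]) (cst C%:E) t)).
  apply: ge0_le_integral => //; first exact: measurableT_comp.
  by move=> t _; rewrite lee_fin.
by rewrite integral_cst //= lebesgue_measure_itv0 // -EFinM.
Qed.

Lemma integral_itv0_addr r g k C : (0 <= r)%R ->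
  measurable_fun `[0%R, r] g -> (forall t, `|g t| <= C)%R ->
  \int[lebesgue_measure]_(t in `[0%R, r]) (g t + k)%:E
  = \int[lebesgue_measure]_(t in `[0%R, r]) (g t)%:E + (k * r)%:E.
Proof.
move=> r0 mg gC; under eq_integral => t _ do rewrite EFinD.
rewrite integralD //.
  by rewrite integral_cst //= lebesgue_measure_itv0 // -EFinM.
- exact: integrable_itv0_normr_le _ _ _ r0 mg gC.
- by apply: (integrable_itv0_normr_le r (cst k) `|k|).
Qed.

End lebesgue_itv0.

Section continuous_borel.
Context {R : realType} {E : pmetricType R}.

Lemma continuous_borelE_measurable (g : E -> R) : continuous g ->
  measurable_fun [set: borelE E] (g : borelE E -> R).
Proof.
move=> /continuousP cg; apply: (measurability _ (RGenOpens.measurableE R)).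
move=> _ [_ [a [b ->]] <-]; rewrite setTI.
by apply: sub_sigma_algebra; apply: cg; exact: interval_open.
Qed.

End continuous_borel.

Section stopping_times.
Context {R : realType} {dO : measure_display} {Omega : measurableType dO}.
Context {F : R -> set (set Omega)}.
Hypothesis hF : filtration F.

Lemma stopping_time_minr (tau : Omega -> \bar R) (T : R) :
  stopping_time F tau -> 0 <= T ->
  stopping_time F (fun w => Order.min (tau w) T%:E).
Proof.
have [sF _ _] := hF; move=> [tau0 tauF] T0; split.
  by move=> w; rewrite le_min tau0 lee_fin T0.
move=> t t0; have [Tt|tT] := leP T t.
  have -> : [set w | (Order.min (tau w) T%:E <= t%:E)%E] = setT.
    by apply/seteqP; split => // w _; rewrite /= ge_min lee_fin Tt orbT.
  by have [F0 FC _] := sF t t0; have := FC _ F0; rewrite setD0.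
suff -> : [set w | (Order.min (tau w) T%:E <= t%:E)%E] =
          [set w | (tau w <= t%:E)%E] by exact: tauF.
by apply/seteqP; split => w /=; rewrite ge_min lee_fin (leNgt T) tT orbF.
Qed.

Lemma measurable_fine_bounded_stopping_time (sigma : Omega -> \bar R) (T : R) :
  stopping_time F sigma -> (forall w, (sigma w <= T%:E)%E) ->
  measurable_fun setT (fun w => fine (sigma w)).
Proof.
have [_ Fm _] := hF; move=> [sigma0 sigmaF] sigmaT.
have sigmaE w : sigma w = (fine (sigma w))%:E.
  by rewrite fineK // ge0_fin_numE // (le_lt_trans (sigmaT w) (ltry _)).
have mle t : measurable [set w | (sigma w <= t%:E)%E].
  have [t0|t0] := leP 0 t; first exact/Fm/sigmaF.
  suff -> : [set w | (sigma w <= t%:E)%E] = set0 by [].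
  apply/seteqP; split => // w /= sigma_le.
  by have := le_trans (sigma0 w) sigma_le; rewrite lee_fin leNgt t0.
apply: (measurability _ (RGenInftyO.measurableE R)).
move=> _ [_ [r ->] <-]; rewrite setTI.
suff -> : (fun w => fine (sigma w)) @^-1` `]-oo, r[ =
    \bigcup_n [set w | (sigma w <= (r - n.+1%:R^-1)%:E)%E].
  by apply: bigcupT_measurable => n; exact: mle.
apply/seteqP; split => w /=.
  rewrite in_itv /= => /ltr_add_invr [n hn]; exists n => //=.
  by rewrite sigmaE lee_fin lerBrDr ltW.
move=> [n _]; rewrite /= sigmaE lee_fin in_itv /= => sigma_le.
by apply: (le_lt_trans sigma_le); rewrite ltrBlDr ltrDl invr_gt0 ltr0Sn.
Qed.

Section stopT.
Context {tau : Omega -> \bar R} {T : R}.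
Hypotheses (htau : stopping_time F tau) (T0 : 0 <= T).

Let min_ge0 w : (0 <= Order.min (tau w) T%:E)%E.
Proof. by rewrite le_min htau.1 lee_fin T0. Qed.

Let min_le w : (Order.min (tau w) T%:E <= T%:E)%E.
Proof. by rewrite ge_min lexx orbT. Qed.

Lemma stopT_ge0 w : 0 <= stopT tau T w.
Proof. exact: fine_ge0. Qed.

Lemma stopTE w : Order.min (tau w) T%:E = (stopT tau T w)%:E.
Proof.
by rewrite fineK // ge0_fin_numE // (le_lt_trans (min_le w)) ?ltry.
Qed.

Lemma stopT_le w : stopT tau T w <= T.
Proof. by rewrite -lee_fin -stopTE. Qed.

Lemma measurable_stopT : measurable_fun setT (stopT tau T).
Proof.
exact: measurable_fine_bounded_stopping_time
  (stopping_time_minr _ _ htau T0) min_le.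
Qed.

End stopT.

End stopping_times.

Section path_integrals.
Context {R : realType} {E : pmetricType R}.
Context {dO : measure_display} {Omega : measurableType dO}.
Context {X : R -> Omega -> E}.
Hypothesis mX : measurable_fun [set p : R * Omega | 0 <= p.1]
  (fun p : R * Omega => (X p.1 p.2 : borelE E)).

Let measurable_nonneg_time : measurable [set p : R * Omega | 0 <= p.1].
Proof.
rewrite [S in measurable S](_ : _ = setT `&` fst @^-1` `[0, +oo[%classic).
  by apply: measurable_fst => //; exact: measurable_itv.
by rewrite setTI; apply/seteqP; split => p /=; rewrite in_itv /= andbT.
Qed.

Lemma measurable_path (w : Omega) (r : R) :
  measurable_fun `[0%R, r]%classic (fun t => (X t w : borelE E)).
Proof.
rewrite (_ : (fun t => _) =
  (fun p : R * Omega => (X p.1 p.2 : borelE E)) \o pair^~ w) //.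
apply: (measurable_comp measurable_nonneg_time) => //.
  by move=> _ [t + <-]; rewrite /= in_itv /= => /andP[].
exact: measurable_funTS (pair2_measurable w).
Qed.

Lemma measurable_stopped_path (s : Omega -> R) :
  measurable_fun setT s -> (forall w, 0 <= s w) ->
  measurable_fun setT (fun w => (X (s w) w : borelE E)).
Proof.
move=> ms s0.
rewrite (_ : (fun w => _) =
  (fun p : R * Omega => (X p.1 p.2 : borelE E)) \o (fun w => (s w, w))) //.
apply: (measurable_comp measurable_nonneg_time) => //.
  by move=> _ [w _ <-]; exact: s0.
exact: measurable_fun_pair.
Qed.

Let measurable_below_graph (s : Omega -> R) : measurable_fun setT s ->
  measurable [set p : R * Omega | 0 <= p.1 /\ p.1 <= s p.2].
Proof.
move=> ms; rewrite (_ : [set p | _] = [set p | 0 <= p.1] `&`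
    ((fun p : R * Omega => p.1 - s p.2) @^-1` `]-oo, 0]%classic)).
  apply: measurableI; first exact: measurable_nonneg_time.
  rewrite -[S in measurable S]setTI.
  apply: measurable_funB; [exact: measurable_fst|exact: measurableT_comp ms _|
                           exact: measurableT|exact: measurable_itv].
by apply/seteqP; split => p /=; rewrite in_itv /= subr_le0.
Qed.

(* Tonelli applied to the positive and negative parts of the integrand
   restricted to the region under the graph of s. *)
Lemma measurable_path_integral (g : E -> R) (s : Omega -> R) :
  measurable_fun [set: borelE E] (g : borelE E -> R) ->
  measurable_fun setT s ->
  measurable_fun setT
    (fun w => (\int[lebesgue_measure]_(t in `[0%R, s w]) (g (X t w))%:E)%E).
Proof.
move=> mg ms.
pose D := [set p : R * Omega | 0 <= p.1 /\ p.1 <= s p.2].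
pose G := (fun p : R * Omega => (g (X p.1 p.2))%:E : \bar R) \_ D.
have mD : measurable D by exact: measurable_below_graph.
have mG : measurable_fun setT G.
  apply: (measurable_restrict _ mD measurableT).1; rewrite setTI.
  apply/measurable_EFinP; apply: measurableT_comp mg _.
  by apply: (measurable_funS measurable_nonneg_time _ mX) => p [].
have GE w : (\int[lebesgue_measure]_(t in `[0%R, s w]) (g (X t w))%:E =
    fubini_G lebesgue_measure G^\+ w - fubini_G lebesgue_measure G^\- w)%E.
  rewrite integral_mkcond integralE /fubini_G.
  have -> : (fun t => (g (X t w))%:E) \_ `[0%R, s w] = (fun t => G (t, w)).
    apply/funext => t; rewrite /G /patch.
    suff -> : (t \in `[0%R, s w]%classic) = ((t, w) \in D) by [].
    apply/idP/idP => /set_mem tD; apply/mem_set; move: tD.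
      by rewrite /D /= in_itv /= => /andP.
    by rewrite /D /= in_itv /= => -[t0 tsw]; apply/andP.
  congr (_ - _)%E; apply: eq_integral => t _.
    by rewrite !funeposE.
  by rewrite !funenegE.
apply: (eq_measurable_fun (fubini_G lebesgue_measure G^\+
                             \- fubini_G lebesgue_measure G^\-)%E).
  by move=> w _; rewrite GE.
apply: emeasurable_funB; apply: measurable_fun_fubini_tonelli_G.
- exact: measurable_funepos.
- by move=> ?; exact: funepos_ge0.
- exact: measurable_funeneg.
- by move=> ?; exact: funeneg_ge0.
Qed.

End path_integrals.

Section optional_stopping.
Context {R : realType} {E : pmetricType R}.
Context {dO : measure_display} {Omega : measurableType dO}.
Context {F : R -> set (set Omega)} {P : E -> probability Omega R}
  {X : R -> Omega -> E} {Pt : R -> E -> probability (borelE E) R}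
  {mu : probability (borelE E) R} {f : E -> R}.
Hypothesis hF : filtration F.
Hypothesis mX : measurable_fun [set p : R * Omega | 0 <= p.1]
  (fun p : R * Omega => (X p.1 p.2 : borelE E)).
Hypothesis hf : Cb f.
Hypothesis hq : zero_potential_facts F P X Pt mu f.

Local Notation m := (mean mu f).
Local Notation q := (zero_potential Pt mu f).

Let measurable_subr (a : R) :
  measurable_fun [set: borelE E] ((fun y => f y - a) : borelE E -> R).
Proof.
exact: measurable_funB (continuous_borelE_measurable _ hf.1) (measurable_cst a).
Qed.

Section stopped_at.
Variables (x : E) (tau : Omega -> \bar R) (T : R).
Hypotheses (htau : stopping_time F tau) (T0 : 0 <= T).

Local Notation s := (stopT tau T).

Let measurable_path_subr (a : R) w :
  measurable_fun `[0%R, s w] (fun t => f (X t w) - a).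
Proof.
exact: measurableT_comp (measurable_subr a) (measurable_path mX w (s w)).
Qed.

Let normr_subr_le (a : R) : exists C, forall y, `|f y - a| <= C.
Proof.
have [M fM] := hf.2; exists (M + `|a|) => y.
by rewrite (le_trans (ler_normD _ _)) // normrN lerD.
Qed.

Let A w := (\int[lebesgue_measure]_(t in `[0%R, s w]) (f (X t w) - m)%:E)%E.

Let measurable_s : measurable_fun setT s := measurable_stopT hF htau T0.

Let measurable_A : measurable_fun setT A.
Proof.
exact: measurable_path_integral mX _ _ (measurable_subr m) measurable_s.
Qed.

Let measurable_zero_potential_stopT :
  measurable_fun setT (fun w => q (X (s w) w)).
Proof.
apply: measurableT_comp (continuous_borelE_measurable _ hq.1) _.
exact: measurable_stopped_path mX _ measurable_s (stopT_ge0 htau T0).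
Qed.

Let abse_A_le : exists C, forall w, (`|A w| <= C%:E)%E.
Proof.
have [C fC] := normr_subr_le m; exists (C * T) => w.
have C0 : 0 <= C by apply: le_trans (fC point); exact: normr_ge0.
apply: (le_trans (abse_integral_itv0_le _ _ _ (stopT_ge0 htau T0 w)
                    (measurable_path_subr m w) (fun t => fC (X t w)))).
by rewrite lee_fin ler_wpM2l // (stopT_le htau T0).
Qed.

Let integrable_A : (P x).-integrable setT A.
Proof.
have [C AC] := abse_A_le.
apply: (le_integrable measurableT measurable_A (g := EFin \o cst `|C|)).
  by move=> w _; rewrite /= normr_id (le_trans (AC w)) // lee_fin ler_norm.
exact: finite_measure_integrable_cst.
Qed.

Let optional_stopping_stopT :
  (q x)%:E = (\int[P x]_w (A w + (q (X (s w) w))%:E))%E.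
Proof.
apply: (hq.2 x _ (stopping_time_minr hF tau T htau T0)).
by exists T => w; rewrite ge_min lexx orbT.
Qed.

Let integrable_A_add_zero_potential :
  (P x).-integrable setT (fun w => A w + (q (X (s w) w))%:E)%E.
Proof.
apply: integrable_fin_integral => //; last by rewrite -optional_stopping_stopT.
by apply: emeasurable_funD => //; exact/measurable_EFinP.
Qed.

(* q need not be bounded: integrability of q(X_s) comes from that of
   A + q(X_s), whose mean is q(x), and of the bounded A. *)
Let integrable_zero_potential_stopT :
  (P x).-integrable setT (fun w => (q (X (s w) w))%:E).
Proof.
apply: (eq_integrable _ (fun w => A w + (q (X (s w) w))%:E - A w)%E) => //.
  have [C AC] := abse_A_le; move=> w _; rewrite addeAC subee ?add0e //.
  by rewrite -abse_fin_num ge0_fin_numE // (le_lt_trans (AC w)) ?ltry.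
exact: integrableB.
Qed.

Lemma integral_path_integral_stopT (c : R) :
  (\int[P x]_w (\int[lebesgue_measure]_(t in `[0%R, s w]) (f (X t w) - c)%:E))%E
  = ((q x)%:E + \int[P x]_w (((m - c) * s w - q (X (s w) w))%:E))%E.
Proof.
have [C fC] := normr_subr_le m.
have pathE w : (\int[lebesgue_measure]_(t in `[0%R, s w]) (f (X t w) - c)%:E
               = A w + ((m - c) * s w)%:E)%E.
  transitivity (\int[lebesgue_measure]_(t in `[0%R, s w])
                  (f (X t w) - m + (m - c))%:E)%E.
    by apply: eq_integral => t _; rewrite addrA subrK.
  exact: integral_itv0_addr _ _ _ _ (stopT_ge0 htau T0 w)
           (measurable_path_subr m w) (fun t => fC (X t w)).
have iV : (P x).-integrable setT (fun w => ((m - c) * s w - q (X (s w) w))%:E).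
  apply: (eq_integrable _
    (fun w => ((m - c) * s w)%:E - (q (X (s w) w))%:E)%E) => //.
  apply: integrableB integrable_zero_potential_stopT => //.
  apply: (integrable_normr_le _ _ _ (`|m - c| * T)) => //.
  - by rewrite /= probability_setT ltry.
  - exact: measurable_funM (measurable_cst _) measurable_s.
  - move=> w _; rewrite normrM ler_wpM2l // ger0_norm ?(stopT_ge0 htau T0 w) //.
    exact: stopT_le htau T0 w.
rewrite optional_stopping_stopT -integralD //.
by apply: eq_integral => w _; rewrite pathE -[RHS]addeA -EFinD subrKC.
Qed.

End stopped_at.

Lemma gamma_le_zero_potential_add_gamma_bar (delta : R) (x : E) :
  (gamma F P X f (delta * m) x <= (q x)%:E + gamma_bar F P X Pt mu f delta x)%E.
Proof.
apply: ge_ereal_sup => _ [tau htau <-].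
pose J T := (\int[P x]_w ((1 - delta) * m * stopT tau T w
                           - q (X (stopT tau T w) w))%:E)%E.
apply: (le_trans (limf_einf_le_addl _ _ J (q x) _)).
  exists 0; split => [|T /ltW T0]; first exact: real0.
  rewrite /= integral_path_integral_stopT //; congr (_ + _)%E.
  by apply: eq_integral => w _; rewrite [(1 - delta) * _]mulrBl mul1r.
by rewrite leeD2l //; apply: ereal_sup_ubound; exists tau.
Qed.

End optional_stopping.

Theorem mainTheorem10 (R : realType) (E : pmetricType R)
  (dO : measure_display) (Omega : measurableType dO)
  (F : R -> set (set Omega)) (P : E -> probability Omega R)
  (X : R -> Omega -> E) (Pt : R -> E -> probability (borelE E) R)
  (mu : probability (borelE E) R) (K : E -> R) (h : R -> R)
  (f : E -> R) (delta : R) :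
  locally_compact [set: E] ->
  markov_process F P X Pt ->
  weak_feller Pt ->
  A2 P X Pt mu K h ->
  Cb f ->
  zero_potential_facts F P X Pt mu f ->
  mean mu f < 0 ->
  0 < delta <= 1 ->
  (forall x, (gamma_bar F P X Pt mu f delta x < +oo)%E) ->
  forall x, (gamma F P X f (delta * mean mu f) x < +oo)%E.
Proof.
(* The bound gamma <= q + gamma_bar holds for every delta. *)
move=> _ [hF [_ [mX _]]] _ _ hf hq _ _ gamma_bar_lty x.
apply: le_lt_trans
  (gamma_le_zero_potential_add_gamma_bar hF mX hf hq delta x) _.
by rewrite lte_add_pinfty ?ltry.
Qed.
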